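(* Let $\mathcal A=\{G\in\mathcal G:\ \overline G\text{ is Abelian}\}$ and let $A\in\mathcal G$ be such that $\overline A\cong\bigoplus_{p\in\mathbf P}\mathbb Z[p^\infty]^{(\mathbb N)}$. Then the isomorphism class $\{G\in\mathcal G:\ \overline G\cong\overline A\}$ is dense in $\mathcal A$.
   Context: Let $\mathbb N=\{1,2,3,\dots\}$. Equip $\mathbb N^{\mathbb N\times\mathbb N}$ with the product topology of the discrete topology on $\mathbb N$. Let $\mathcal G$ be the subspace consisting of those $A\in\mathbb N^{\mathbb N\times\mathbb N}$ that are the multiplication table of a group on the underlying set $\mathbb N$ whose identity element is $1$. For $G\in\mathcal G$, $\overline G$ denotes the group on $\mathbb N$ with multiplication table $G$. $\mathbf P$ is the set of primes, $\mathbb Z[p^\infty]$ is the Prüfer $p$-group, and $K^{(\mathbb N)}$ is the direct sum of countably infinitely many copies of $K$. $\mathcal A$ carries the subspace topology. *)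

(* the index set N = {1,2,...}
   is Stdlib's [positive], identity element 1%positive. *)
From Stdlib Require Import PArith List.
From mathcomp Require Import all_boot all_order all_algebra.
Set Implicit Arguments. Unset Strict Implicit. Unset Printing Implicit Defensive.
Import Order.TTheory GRing.Theory Num.Theory.

(* A point of N^(N x N): a multiplication table. *)
Definition table := positive -> positive -> positive.

Definition is_group_table (G : table) : Prop :=
  (forall x y z, G (G x y) z = G x (G y z)) /\
  (forall x, G 1%positive x = x /\ G x 1%positive = x) /\
  (forall x, exists y, G x y = 1%positive /\ G y x = 1%positive).

Definition is_abelian_table (G : table) : Prop :=
  is_group_table G /\ forall x y, G x y = G y x.

Definition table_iso (G H : table) : Prop :=
  exists f : positive -> positive, bijective f /\
    forall x y, f (G x y) = H (f x) (f y).

(* Z[p^oo] is realised as { q in Q : 0 <= q < 1, denominator of q a power of p }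
   with addition modulo 1.  An element of the direct sum is a family
   d : nat (prime index p) -> nat (copy index n) -> rat, with d p n in Z[p^oo],
   d p n = 0 for non-prime p, and only finitely many nonzero entries. *)
Local Open Scope ring_scope.

Definition in_pruefer (p : nat) (q : rat) : Prop :=
  0 <= q /\ q < 1 /\ exists k : nat, denq q = (p ^ k)%N%:Z.

Definition add_mod1 (a b : rat) : rat := if a + b < 1 then a + b else a + b - 1.

Definition in_sum_pruefer (d : nat -> nat -> rat) : Prop :=
  (forall p n, prime p -> in_pruefer p (d p n)) /\
  (forall p n, ~~ prime p -> d p n = 0) /\
  (exists N : nat, forall p n, (N <= p)%N \/ (N <= n)%N -> d p n = 0).

Definition add_sum_pruefer (d e : nat -> nat -> rat) : nat -> nat -> rat :=
  fun p n => add_mod1 (d p n) (e p n).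

Definition iso_sum_pruefer (A : table) : Prop :=
  exists phi : positive -> (nat -> nat -> rat),
    (forall x, in_sum_pruefer (phi x)) /\
    (forall x y, phi x = phi y -> x = y) /\
    (forall d, in_sum_pruefer d -> exists x, phi x = d) /\
    (forall x y, phi (A x y) = add_sum_pruefer (phi x) (phi y)).

(* Density of a set S of tables in a set T, for the product topology of
   discrete N: every basic open set of T (tables agreeing with some G in T on
   a finite set of positions) meets S. *)
Definition dense_in (S T : table -> Prop) : Prop :=
  forall G, T G -> forall F : list (positive * positive),
    exists H, S H /\ T H /\ forall i j, In (i, j) F -> H i j = G i j.

(* Let G be abelian and let S be the finite set of elements occurring at the
   prescribed positions of its table.  For distinct s, t in S, a homomorphism
   from <s - t> to Z[p^oo] that does not kill s - t extends, one generator at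
   a time, to the subgroup generated by S, because Z[p^oo] = Z[1/p]/Z is
   divisible.  Giving each pair (s, t) its own coordinate yields a map from S
   to the direct sum of the Z[p^oo] that is injective and additive on S.
   Pulling it back to A through the isomorphism and extending the resulting
   injection of S to a permutation of N transports the table of A to a table
   isomorphic to A that agrees with G at the prescribed positions. *)

From Stdlib Require Import PArith List.
From HB Require Import structures.
From mathcomp Require Import all_boot all_order all_algebra.
From mathcomp Require Import ring lra zify boolp.
Set Implicit Arguments. Unset Strict Implicit. Unset Printing Implicit Defensive.
Import Order.TTheory GRing.Theory Num.Theory.
Local Open Scope ring_scope.

Definition pden (p : nat) (x : rat) : Prop :=
  exists k : nat, x * (p ^ k)%N%:R \is a Num.int.

Lemma pden_int p x : x \is a Num.int -> pden p x.
Proof. by move=> x_int; exists 0%N; rewrite expn0 mulr1. Qed.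

Lemma pdenD p x y : pden p x -> pden p y -> pden p (x + y).
Proof.
move=> [k xk] [l yl]; exists (k + l)%N.
rewrite expnD natrM mulrDl mulrA [y * _]mulrCA.
by rewrite rpredD // rpredM // rpred_nat.
Qed.

Lemma pdenMz p x z : pden p x -> pden p (x *~ z).
Proof. by move=> [k xk]; exists k; rewrite mulrzAl rpredMz. Qed.

Lemma pden_sum p (I : finType) (F : I -> rat) :
  (forall i, pden p (F i)) -> pden p (\sum_i F i).
Proof. by move=> FP; apply: (big_ind (pden p)) => //; [apply: pden_int | apply: pdenD]. Qed.

Lemma prime_expr_neq0 p k : prime p -> (p ^ k)%N%:R != 0 :> rat.
Proof. by move=> p_pr; rewrite pnatr_eq0 -lt0n expn_gt0 prime_gt0. Qed.

(* The witness is [a u / p^(e + b)], where [x = a / p^e], [n = p^b m] with [m]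
   coprime to [p], and [u m = 1] modulo [p^e]. *)
Lemma pden_divn p x n : prime p -> pden p x -> (0 < n)%N ->
  exists2 c, pden p c & n%:R * c - x \is a Num.int.
Proof.
move=> p_pr [e xe] n_gt0; pose a := Num.floor (x * (p ^ e)%N%:R).
have xE : x = a%:~R / (p ^ e)%N%:R.
  by rewrite /a floorK // mulfK // prime_expr_neq0.
have nE : n = (p ^ logn p n * n`_p^')%N by rewrite -p_part partnC.
have cop : coprime (p ^ e) n`_p^'.
  by apply: (@pnat_coprime p); rewrite ?part_pnat // pnatX pnat_id.
have [u [v /esym uv]] := Bezoutz (n`_p^')%:Z (p ^ e)%N%:Z.
move: uv; rewrite /gcdz /= gcdnC (eqP cop) => /(congr1 (fun z : int => z%:~R : rat)).
rewrite /= intrD !intrM => uv.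
exists ((a * u)%:~R / (p ^ (e + logn p n))%N%:R).
  by exists (e + logn p n)%N; rewrite mulfVK ?intr_int // prime_expr_neq0.
have -> : n%:R * ((a * u)%:~R / (p ^ (e + logn p n))%N%:R) - x = - (v * a)%:~R.
  rewrite xE {1}nE expnD !natrM !intrM.
  have := prime_expr_neq0 e p_pr; have := prime_expr_neq0 (logn p n) p_pr.
  move: uv; rewrite -!pmulrn mulr1n.
  set P := (p ^ e)%N%:R; set Q := (p ^ logn p n)%N%:R; set m := (n`_p^')%N%:R.
  move=> uv Qn0 Pn0.
  have -> : Q * m * (a%:~R * u%:~R / (P * Q)) - a%:~R / P = a%:~R * (u%:~R * m - 1) / P.
    by field; rewrite Pn0 Qn0.
  have -> : u%:~R * m - 1 = - (v%:~R * P).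
    by rewrite [X in _ - X]uv; ring.
  by field; rewrite Pn0.
by rewrite rpredN intr_int.
Qed.

Definition frac (x : rat) : rat := x - (Num.floor x)%:~R.

Lemma frac_ge0 x : 0 <= frac x.
Proof. by rewrite subr_ge0 floor_le. Qed.

Lemma frac_lt1 x : frac x < 1.
Proof. by rewrite ltrBlDl -[1]/(1%:~R) -intrD floorD1_gt. Qed.

Lemma frac_subr_int x : x - frac x \is a Num.int.
Proof. by rewrite opprB addrC subrK intr_int. Qed.

Lemma frac_id x : 0 <= x < 1 -> frac x = x.
Proof. by move=> x01; rewrite /frac (@floor_def _ x 0) ?subr0 ?add0r. Qed.

Lemma frac_eq x y : (frac x = frac y) <-> (x - y \is a Num.int).
Proof.
split=> [fxy | xy_int].
  have -> : x - y = (x - frac x) - (y - frac y) by rewrite fxy; ring.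
  by rewrite rpredB ?frac_subr_int.
have -> : x = y + (x - y) by rewrite addrC subrK.
by rewrite /frac floorDrz // intrD (floorK xy_int) opprD addrACA subrr addr0.
Qed.

Lemma add_mod1_frac x y : add_mod1 (frac x) (frac y) = frac (x + y).
Proof.
have -> : frac (x + y) = frac (frac x + frac y).
  by apply/frac_eq; rewrite opprD addrACA rpredD ?frac_subr_int.
have := frac_lt1 x; have := frac_lt1 y; have := frac_ge0 x; have := frac_ge0 y.
rewrite /add_mod1 => fy0 fx0 fy1 fx1; case: ifP => [lt1 | /negbT].
  by rewrite [RHS]frac_id // lt1 andbT addr_ge0.
rewrite -leNgt => ge1.
rewrite -(@frac_id (frac x + frac y - 1)); last by apply/andP; split; lra.
by apply/frac_eq; rewrite addrAC subrr add0r rpredN rpred1.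
Qed.

Lemma denq_dvdn (y : rat) (N : nat) : y * N%:R \is a Num.int -> (`|denq y| %| N)%N.
Proof.
move=> yN_int; pose m := Num.floor (y * N%:R).
have num_den : numq y * N%:Z = m * denq y.
  apply: (@intr_inj rat); rewrite !intrM numqE /m floorK //.
  by rewrite mulrAC.
have : (`|denq y| %| `|numq y| * N)%N.
  by rewrite -[N]/(`|N%:Z|%N) -abszM num_den abszM dvdn_mull.
by rewrite Gauss_dvdr // coprime_sym coprime_num_den.
Qed.

Lemma frac_in_pruefer p x : prime p -> pden p x -> in_pruefer p (frac x).
Proof.
move=> p_pr x_pden; have [k fxk] : pden p (frac x).
  by rewrite /frac; apply: pdenD => //; apply: pden_int; rewrite rpredN intr_int.
split; [exact: frac_ge0 | split; [exact: frac_lt1 |]].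
have /(dvdn_pfactor _ _ p_pr) [j _ den_fx] := denq_dvdn fxk.
by exists j; rewrite -den_fx abszE ger0_norm // ltW // denq_gt0.
Qed.

Definition lincomb (V : zmodType) (v : nat -> V) (k : nat) (a : nat -> int) : V :=
  \sum_(i < k) v i *~ a i.

Section LinearCombinations.
Variables (V : zmodType) (v : nat -> V) (k : nat).

Lemma lincombD a b : lincomb v k (fun i => a i + b i) = lincomb v k a + lincomb v k b.
Proof. by rewrite /lincomb -big_split; apply: eq_bigr => i _; rewrite mulrzDr. Qed.

Lemma lincombB a b : lincomb v k (fun i => a i - b i) = lincomb v k a - lincomb v k b.
Proof. by rewrite /lincomb -sumrB; apply: eq_bigr => i _; rewrite mulrzBr. Qed.

Lemma lincombMz a z : lincomb v k (fun i => z * a i) = lincomb v k a *~ z.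
Proof.
rewrite /lincomb mulrz_suml; apply: eq_bigr => i _.
by rewrite mulrC mulrzA.
Qed.

Lemma lincombS a : lincomb v k.+1 a = lincomb v k a + v k *~ a k.
Proof. exact: big_ord_recr. Qed.

Lemma lincomb_delta j : (j < k)%N -> lincomb v k (fun i => (i == j)%:Z) = v j.
Proof.
move=> ltjk; rewrite /lincomb (bigD1 (Ordinal ltjk)) //= eqxx mulr1z big1 ?addr0 //.
by move=> i; rewrite -val_eqE /= => /negbTE ->; rewrite mulr0z.
Qed.

Lemma eq_lincomb (w : nat -> V) a :
  (forall i, (i < k)%N -> v i = w i) -> lincomb v k a = lincomb w k a.
Proof. by move=> vw; apply: eq_bigr => i _; rewrite vw. Qed.

End LinearCombinations.

Section CharacterExtension.
Variables (M : zmodType) (g : nat -> M).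

Definition in_span k (x : M) : Prop := exists a, x = lincomb g k a.

Lemma in_span0 k : in_span k 0.
Proof. by exists (fun=> 0); rewrite /lincomb big1 // => i _; rewrite mulr0z. Qed.

Lemma in_spanB k x y : in_span k x -> in_span k y -> in_span k (x - y).
Proof. by move=> [a ->] [b ->]; exists (fun i => a i - b i); rewrite lincombB. Qed.

Lemma in_spanMz k x z : in_span k x -> in_span k (x *~ z).
Proof. by move=> [a ->]; exists (fun i => z * a i); rewrite lincombMz. Qed.

(* [n = 0] covers the case where no nonzero multiple of [g k] is in the span. *)
Lemma span_annihilator k : exists n : nat,
  in_span k (g k *~ n%:Z) /\ forall z, in_span k (g k *~ z) -> (n%:Z %| z)%Z.
Proof.
have gk_abs z : in_span k (g k *~ z) -> in_span k (g k *~ `|z|%N).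
  by rewrite abszEsg mulrC mulrzA; apply: in_spanMz.
have [[j [j_gt0 gkj]] | no_mul] :=
  EM (exists j : nat, (0 < j)%N /\ in_span k (g k *~ j%:Z)); last first.
  exists 0%N; split=> [|z gkz]; first by rewrite mulr0z; apply: in_span0.
  have [-> // | z_neq0] := eqVneq z 0.
  by case: no_mul; exists `|z|%N; rewrite absz_gt0 z_neq0; split; last exact: gk_abs.
pose P j := `[< (0 < j)%N /\ in_span k (g k *~ j%:Z) >].
have [|n /asboolP [n_gt0 gkn] n_min] := @ex_minnP P; first by exists j; apply/asboolP.
exists n; split=> // z gkz; apply/dvdz_mod0P/eqP; apply: contraTT isT => r_neq0.
have r_ge0 : 0 <= (z %% n)%Z by rewrite modz_ge0 // eqz_nat -lt0n.
have gkr : in_span k (g k *~ (z %% n)%Z).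
  rewrite [X in g k *~ X](_ : _ = z - (z %/ n)%Z * n) ?mulrzBr.
    by apply: in_spanB => //; rewrite mulrC mulrzA; apply: in_spanMz.
  by rewrite {2}(divz_eq z n) addrC addKr.
have := n_min `|(z %% n)%Z|%N; rewrite -lez_nat gez0_abs // leNgt ltz_pmod ?ltz_nat //.
by apply; apply/asboolP; rewrite -ltz_nat gez0_abs // lt_def r_neq0.
Qed.

(* [c i] is the image of [g i] under a homomorphism from the subgroup spanned
   by [g 0], ..., [g k.-1] to [Z[1/p]/Z], rationals being read modulo [Z]. *)
Definition pcharacter p k (c : nat -> rat) : Prop :=
  (forall i, (i < k)%N -> pden p (c i)) /\
  forall a, lincomb g k a = 0 -> lincomb c k a \is a Num.int.

(* If [g k *~ n = lincomb g k b] generates the relations involving [g k], any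
   [ck] with [n * ck = lincomb c k b] modulo [Z] extends [c]. *)
Lemma pcharacter_extend p k c : prime p -> pcharacter p k c ->
  exists ck, pcharacter p k.+1 (fun i => if i == k then ck else c i).
Proof.
move=> p_pr [c_pden c_rel]; have [n [[b gkn] n_dvd]] := span_annihilator k.
have cb_pden : pden p (lincomb c k b).
  by apply: pden_sum => i; apply/pdenMz/c_pden.
have [ck ck_pden ck_div] : exists2 ck, pden p ck & n%:R * ck - lincomb c k b \is a Num.int.
  have [n0 | n_gt0] := posnP n; last exact: pden_divn.
  exists 0; first exact/pden_int/rpred0.
  by rewrite mulr0 sub0r rpredN c_rel // -gkn n0 mulr0z.
exists ck; split=> [i | a a_rel].
  by rewrite ltnS leq_eqVlt; case: eqP => //= _ /c_pden.
have [q akE] : exists q, a k = q * n%:Z.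
  apply/dvdzP/n_dvd; have -> : g k *~ a k = 0 - lincomb g k a.
    by rewrite sub0r; apply/eqP; rewrite -addr_eq0 addrC -lincombS a_rel.
  by apply: in_spanB; [apply: in_span0 | exists a].
have rel_k : lincomb g k (fun i => a i + q * b i) = 0.
  by rewrite lincombD lincombMz -gkn mulrzA_C -akE -lincombS.
have := c_rel _ rel_k; rewrite lincombD lincombMz => ab_int.
rewrite lincombS eqxx (eq_lincomb (w := c)); last by move=> i /ltn_eqF ->.
have -> : lincomb c k a + ck *~ a k =
    (lincomb c k a + lincomb c k b *~ q) + (n%:R * ck - lincomb c k b) *~ q.
  by rewrite akE; ring.
by rewrite rpredD // rpredMz.
Qed.

(* Take [c 0 = 1/p] for a prime [p] dividing the order of [g 0] (any prime if
   that order is infinite). *)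
Lemma pcharacter_init : g 0 != 0 ->
  exists p c, [/\ prime p, pcharacter p 1 c & c 0%N \isn't a Num.int].
Proof.
move=> g0_neq0; have [n [gn n_dvd]] := span_annihilator 0.
have span0 x : in_span 0 x -> x = 0 by move=> [a ->]; rewrite /lincomb big_ord0.
have [p p_pr p_dvd] : exists2 p, prime p & (p %| n)%N.
  case: n gn {n_dvd} => [|[|n]] gn; first by exists 2%N.
    by move: g0_neq0; rewrite -[g 0]mulr1z (span0 _ gn) eqxx.
  by exists (pdiv n.+2); rewrite ?pdiv_prime ?pdiv_dvd.
have p_gt0 : 0 < p%:R :> rat by rewrite ltr0n prime_gt0.
exists p, (fun=> p%:R^-1); split=> //.
  split=> [i _ | a]; first by exists 1%N; rewrite expn1 mulVf ?gt_eqF.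
  rewrite /lincomb !big_ord1 => ga0.
  have /dvdzP [q ->] : (p%:Z %| a 0%N)%Z.
    apply: (@dvdz_trans n%:Z) (n_dvd _ _); first exact: p_dvd.
    by rewrite [g 0 *~ _]ga0; apply: in_span0.
  by rewrite mulrC mulrzA -pmulrn -[_ *+ p]mulr_natr mulVf ?gt_eqF // rpredMz ?rpred1.
apply/negP => /norm_intr_ge1 /(_ (invr_neq0 (lt0r_neq0 p_gt0))).
by rewrite ger0_norm ?invr_ge0 ?ler0n // invf_ge1 // lern1 leqNgt prime_gt1.
Qed.

Lemma pcharacter_exists k : g 0 != 0 ->
  exists p c, [/\ prime p, pcharacter p k.+1 c & c 0%N \isn't a Num.int].
Proof.
move=> g0_neq0; elim: k => [|k [p [c [p_pr c_char c0]]]]; first exact: pcharacter_init.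
have [ck ck_char] := pcharacter_extend p_pr c_char.
by exists p, (fun i => if i == k.+1 then ck else c i).
Qed.

End CharacterExtension.

Definition partial_character (M : zmodType) p (S : seq M) (chi : M -> rat) : Prop :=
  {in S, forall x, pden p (chi x)} /\
  {in S &, forall x y, x + y \in S -> chi (x + y) - chi x - chi y \is a Num.int}.

(* Use the generators [s - t] followed by [S]; the relation [(s - t) - s + t = 0]
   turns [c 0] not being an integer into [c s - c t] not being one. *)
Lemma separating_character (M : zmodType) (S : seq M) (s t : M) :
  exists pc : nat * (M -> rat), [/\ prime pc.1, partial_character pc.1 S pc.2 &
    s \in S -> t \in S -> s != t -> pc.2 s - pc.2 t \isn't a Num.int].
Proof.
have [[sS tS st] | not_sep] := EM [/\ s \in S, t \in S & s != t]; last first.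
  exists (2%N, fun=> 0); split=> //=; last by move=> sS tS st; case: not_sep.
  by split=> [x _ | x y _ _ _]; [apply/pden_int | rewrite !subr0].
pose g := nth 0 ((s - t) :: S).
have g0_neq0 : g 0%N != 0 by rewrite subr_eq0.
have [p [c [p_pr [c_pden c_rel] c0]]] := pcharacter_exists (size S) g0_neq0.
have ltS x : x \in S -> ((index x S).+1 < (size S).+1)%N by rewrite ltnS index_mem.
have gS x : x \in S -> g (index x S).+1 = x by move=> xS; rewrite /g /= nth_index.
pose delta x i := ((i == (index x S).+1) : nat)%:Z.
have lincomb_delta_g x : x \in S -> lincomb g (size S).+1 (delta x) = x.
  by move=> xS; rewrite lincomb_delta ?gS ?ltS.
have lincomb_delta_c x : x \in S -> lincomb c (size S).+1 (delta x) = c (index x S).+1.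
  by move=> xS; rewrite lincomb_delta ?ltS.
exists (p, fun x => c (index x S).+1); split=> //=; first split.
- by move=> x /ltS /c_pden.
- move=> x y xS yS xyS; rewrite -!lincomb_delta_c // -!lincombB; apply: c_rel.
  by rewrite !lincombB !lincomb_delta_g // addrAC addrK subrr.
- move=> _ _ _; apply/negP => st_int; move/negP: c0; apply.
  pose delta0 i := ((i == 0%N) : nat)%:Z.
  have rel : lincomb g (size S).+1 (fun i => delta0 i - delta s i + delta t i) = 0.
    by rewrite lincombD lincombB !lincomb_delta_g // lincomb_delta // addrAC subrK subrr.
  have := c_rel _ rel; rewrite lincombD lincombB !lincomb_delta_c // lincomb_delta //.
  move=> rel_int; rewrite -(subrK (c (index s S).+1 - c (index t S).+1) (c 0%N)).
  by rewrite rpredD // opprB addrA addrAC.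
Qed.

Lemma in_pruefer0 p : in_pruefer p 0.
Proof. by split=> //; split=> //; exists 0%N. Qed.

(* Coordinate [(q, n)] carries the character separating the [n]-th pair of
   elements of [S] when [q] is the prime of that character, and is [0] otherwise. *)
Lemma sum_pruefer_partial_embedding (M : zmodType) (S : seq M) :
  exists psi : M -> nat -> nat -> rat,
    [/\ {in S, forall x, in_sum_pruefer (psi x)},
        {in S &, forall x y, x + y \in S ->
           psi (x + y) = add_sum_pruefer (psi x) (psi y)} &
        {in S &, injective psi}].
Proof.
have [pc pcP] := choice (fun st : M * M => separating_character S st.1 st.2).
pose P := [seq (s, t) | s <- S, t <- S]; pose pc_ n := pc (nth (0, 0) P n).
pose psi x q n := if (n < size P)%N && (q == (pc_ n).1) then frac ((pc_ n).2 x) else 0.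
exists psi; split.
- move=> x xS; split; [|split].
  + move=> q n q_pr; rewrite /psi; case: ifP => [/andP [_ /eqP ->] | _]; last exact: in_pruefer0.
    have [p_pr [chi_pden _] _] := pcP (nth (0, 0) P n).
    exact/frac_in_pruefer/chi_pden.
  + move=> q n q_npr; rewrite /psi; case: ifP => // /andP [_ /eqP q_eq].
    by have [] := pcP (nth (0, 0) P n); rewrite -q_eq (negbTE q_npr).
  + exists (maxn (size P) (\max_(i < size P) (pc_ i).1).+1) => q n.
    rewrite /psi; case: ifP => // /andP [n_lt /eqP q_eq] N_le; exfalso.
    have := @leq_bigmax _ (fun i : 'I_(size P) => (pc_ i).1) (Ordinal n_lt).
    rewrite /= -q_eq; set mx := \max_(i < size P) _ in N_le *; case: N_le; lia.
- move=> x y xS yS xyS; apply: funext => q; apply: funext => n.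
  rewrite /add_sum_pruefer /psi; case: ifP => _; last by rewrite /add_mod1 addr0 ltr01.
  rewrite add_mod1_frac; apply/frac_eq; rewrite opprD addrA.
  by have [_ [_ chi_add] _] := pcP (nth (0, 0) P n); apply: chi_add.
- move=> s t sS tS psi_st; apply/eqP/negP => /negP st.
  have st_in : (s, t) \in P by apply: allpairs_f.
  have := congr1 (fun d => d (pc_ (index (s, t) P)).1 (index (s, t) P)) psi_st.
  rewrite /psi index_mem st_in eqxx /pc_ nth_index //= => /frac_eq.
  by have [_ _ /(_ sS tS st) /negP] := pcP (s, t).
Qed.

HB.instance Definition _ := Countable.copy positive (can_type Pos2Nat.id).

Record abelian_table := AbelianTable {
  abelian_table_op :> table;
  abelian_tableP : is_abelian_table abelian_table_op }.

Definition carrier (G : abelian_table) : Type := positive.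
HB.instance Definition _ G := Countable.on (carrier G).

Section AbelianTableZmodule.
Variable G : abelian_table.

Definition table_opp (x : carrier G) : carrier G :=
  projT1 (cid ((abelian_tableP G).1.2.2 x)).

Lemma table_opA : associative (abelian_table_op G : carrier G -> carrier G -> carrier G).
Proof. by move=> x y z; rewrite (abelian_tableP G).1.1. Qed.

Lemma table_opC : commutative (abelian_table_op G : carrier G -> carrier G -> carrier G).
Proof. exact: (abelian_tableP G).2. Qed.

Lemma table_op1x : left_id (1%positive : carrier G) (abelian_table_op G).
Proof. by move=> x; have [] := (abelian_tableP G).1.2.1 x. Qed.

Lemma table_oppx : left_inverse (1%positive : carrier G) table_opp (abelian_table_op G).
Proof. by move=> x; rewrite /table_opp; case: cid => y []. Qed.

End AbelianTableZmodule.

HB.instance Definition _ G :=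
  GRing.isZmodule.Build (carrier G) (@table_opA G) (@table_opC G) (@table_op1x G) (@table_oppx G).

Lemma abelian_table_partial_embedding (G : table) (S : seq positive) :
  is_abelian_table G -> exists psi : positive -> nat -> nat -> rat,
    [/\ {in S, forall x, in_sum_pruefer (psi x)},
        {in S &, forall x y, G x y \in S -> psi (G x y) = add_sum_pruefer (psi x) (psi y)} &
        {in S &, injective psi}].
Proof.
by move=> abG; apply: (sum_pruefer_partial_embedding (S : seq (carrier (AbelianTable abG)))).
Qed.

Definition swap (T : eqType) (b c x : T) : T :=
  if x == b then c else if x == c then b else x.

Lemma swapK (T : eqType) (b c : T) : involutive (swap b c).
Proof.
move=> x; rewrite /swap; have [-> | xb] := eqVneq x b.
  by rewrite eqxx; case: eqVneq.
have [-> | xc] := eqVneq x c; first by rewrite eqxx.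
by rewrite (negbTE xb) (negbTE xc).
Qed.

Lemma extend_bijective_in (T : eqType) (s : seq T) (f : T -> T) :
  {in s &, injective f} -> exists g g', [/\ cancel g g', cancel g' g & {in s, g =1 f}].
Proof.
elim: s => [_ | a s IH f_inj]; first by exists id, id.
have [g [g' [gK g'K gf]]] : exists g g', [/\ cancel g g', cancel g' g & {in s, g =1 f}].
  by apply: IH => x y xs ys; apply: f_inj; rewrite inE ?xs ?ys orbT.
have [as_ | a_notin] := boolP (a \in s).
  by exists g, g'; split=> // x; rewrite inE => /predU1P [-> | /gf //]; apply: gf.
exists (swap (g a) (f a) \o g), (g' \o swap (g a) (f a)).
split=> [x | x | x]; rewrite /= ?(gK, g'K, swapK) //.
rewrite inE => /predU1P [-> | xs]; first by rewrite /swap eqxx.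
have xa : x != a by apply: contraNneq a_notin => <-.
rewrite -(gf x xs) /swap ifN; last by rewrite (can_eq gK).
by rewrite ifN // (gf x xs) (inj_in_eq f_inj) ?inE ?xs ?eqxx ?orbT.
Qed.

Lemma group_table_idem (A : table) e : is_group_table A -> A e e = e -> e = 1%positive.
Proof.
move=> [A_assoc [A_id A_inv]] ee; have [y [_ ye]] := A_inv e.
by rewrite -ye -{2}ee -A_assoc ye (A_id e).1.
Qed.

Lemma transport_group_table (A : table) (g g' : positive -> positive) :
  cancel g g' -> cancel g' g -> g 1%positive = 1%positive -> is_group_table A ->
  is_group_table (fun x y => g' (A (g x) (g y))).
Proof.
move=> gK g'K g1 [A_assoc [A_id A_inv]]; split; [|split].
- by move=> x y z; rewrite !g'K A_assoc.
- by move=> x; rewrite g1 (A_id _).1 (A_id _).2 gK.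
- move=> x; have [y [xy yx]] := A_inv (g x).
  by exists (g' y); rewrite g'K xy yx -g1 gK.
Qed.

Lemma table_iso_abelian (H A : table) : is_group_table H -> table_iso H A ->
  (forall x y, A x y = A y x) -> is_abelian_table H.
Proof.
move=> grpH [f [/bij_inj f_inj f_hom]] A_comm; split=> // x y.
by apply: f_inj; rewrite !f_hom A_comm.
Qed.

Lemma transport_partial_iso (G A : table) (S : seq positive) (tau : positive -> positive) :
  is_group_table G -> is_group_table A -> 1%positive \in S -> {in S &, injective tau} ->
  {in S &, forall x y, G x y \in S -> A (tau x) (tau y) = tau (G x y)} ->
  exists H, [/\ is_group_table H, table_iso H A &
                {in S &, forall x y, G x y \in S -> H x y = G x y}].
Proof.
move=> grpG grpA S1 tau_inj tau_hom.
have G11 : G 1%positive 1%positive = 1%positive by have [] := grpG.2.1 1%positive.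
have tau1 : tau 1%positive = 1%positive.
  by apply: group_table_idem grpA _; rewrite tau_hom ?G11.
have [g [g' [gK g'K g_tau]]] := extend_bijective_in tau_inj.
exists (fun x y => g' (A (g x) (g y))); split.
- by apply: transport_group_table gK g'K _ grpA; rewrite g_tau.
- by exists g; split=> [|x y]; [exists g' | rewrite g'K].
- by move=> x y xS yS xyS; rewrite !g_tau // tau_hom // -g_tau // gK.
Qed.

Lemma add_sum_prueferC d e : add_sum_pruefer d e = add_sum_pruefer e d.
Proof. by apply: funext => p; apply: funext => n; rewrite /add_sum_pruefer /add_mod1 addrC. Qed.

Lemma iso_sum_pruefer_comm (A : table) : iso_sum_pruefer A -> forall x y, A x y = A y x.
Proof.
move=> [phi [_ [phi_inj [_ phi_hom]]]] x y.
by apply: phi_inj; rewrite !phi_hom add_sum_prueferC.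
Qed.

Lemma iso_sum_pruefer_partial_iso (G A : table) (S : seq positive) :
  is_abelian_table G -> iso_sum_pruefer A ->
  exists tau, {in S &, injective tau} /\
    {in S &, forall x y, G x y \in S -> A (tau x) (tau y) = tau (G x y)}.
Proof.
move=> abG [phi [_ [phi_inj [phi_surj phi_hom]]]].
have [psi [psi_sum psi_hom psi_inj]] := abelian_table_partial_embedding S abG.
have tau_ex x : exists y, x \in S -> phi y = psi x.
  have [xS | _] := boolP (x \in S); last by exists x.
  by have [y] := phi_surj _ (psi_sum x xS); exists y.
have [tau tauP] := choice tau_ex.
exists tau; split=> [x y xS yS /(congr1 phi) | x y xS yS xyS].
  by rewrite !tauP // => /psi_inj; apply.
by apply: phi_inj; rewrite phi_hom !tauP // psi_hom.
Qed.

Lemma In_mem (T : eqType) (x : T) (s : seq T) : List.In x s -> x \in s.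
Proof. by elim: s => //= y s IH [-> | /IH]; rewrite inE ?eqxx // => ->; rewrite orbT. Qed.

Theorem proposition8p6 (A : table) :
  is_group_table A -> iso_sum_pruefer A ->
  dense_in (fun G => is_group_table G /\ table_iso G A)
           (fun G => is_group_table G /\ is_abelian_table G).
Proof.
move=> grpA isoA G [grpG abG] F.
pose S := 1%positive :: flatten [seq [:: ij.1; ij.2; G ij.1 ij.2] | ij <- F].
have S_F i j : List.In (i, j) F -> [/\ i \in S, j \in S & G i j \in S].
  move=> /In_mem ijF; have sub w : w \in [:: i; j; G i j] -> w \in S.
    move=> w_in; rewrite inE; apply/orP; right; apply/flattenP.
    by exists [:: i; j; G i j] => //; apply/mapP; exists (i, j).
  by rewrite !sub ?inE ?eqxx ?orbT.
have [tau [tau_inj tau_hom]] := iso_sum_pruefer_partial_iso S abG isoA.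
have [H [grpH isoH HG]] := transport_partial_iso grpG grpA (mem_head _ _) tau_inj tau_hom.
have abH := table_iso_abelian grpH isoH (iso_sum_pruefer_comm isoA).
exists H; do !split=> //.
by move=> i j /S_F [iS jS ijS]; apply: HG.
Qed.
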